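(* Let $\mu \vdash n$ with transpose $\mu'$. Define $\underline{d}_0 = 1$ and $\underline{d}_i = \underline{d}_{i-1} + (\mu'_i - 1)$ for $1 \leq i \leq \mu_1 - 1$. Then the Tanisaki ideal $\mathcal{I}_\mu$ is generated by the polynomials $\sigma \cdot g$ for $\sigma \in \mathfrak{S}_n$ and \[ g \in \{ e_{\underline{d}_1}(x_1, \ldots, x_{n-1}),\ e_{\underline{d}_2}(x_1, \ldots, x_{n-2}),\ \ldots,\ e_{\underline{d}_{\mu_1 - 1}}(x_1, \ldots, x_{n-\mu_1+1}),\ e_1(x_1, \ldots, x_n), \ldots, e_n(x_1, \ldots, x_n)\}. \]
   Context: $\mathfrak{S}_n$ acts on $\mathbb{Q}[x_1, \ldots, x_n]$ by $\sigma \cdot x_i = x_{\sigma(i)}$. For $S \subset [n]$, $e_r(S)$ is the elementary symmetric polynomial of degree $r$ in the variables $\{x_i : i \in S\}$. With $\mu'$ padded by zeros to have $n$ entries, let $d_k(\mu) = \mu'_n + \mu'_{n-1} + \cdots + \mu'_{n-k+1}$. The Tanisaki ideal is $\mathcal{I}_\mu = \langle e_r(S) : S \subset [n],\ |S| - d_{|S|}(\mu) < r \leq |S| \rangle \subset \mathbb{Q}[x_1, \ldots, x_n]$. *)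

From mathcomp Require Import all_boot all_order all_algebra all_fingroup.
From mathcomp Require Import mpoly.
Set Implicit Arguments. Unset Strict Implicit. Unset Printing Implicit Defensive.
Import GRing.Theory.
Local Open Scope ring_scope.

(* A partition mu of n: weakly decreasing sequence of positive parts summing to n.
   mu = [:: mu_1; mu_2; ...]  (1-based in the paper). *)
Definition is_partition (n : nat) (mu : seq nat) : Prop :=
  [/\ sorted geq mu, all (fun m => 0 < m)%N mu & sumn mu = n].

Definition part1 (mu : seq nat) : nat := head 0%N mu.

(* transpose: mu'_i = #{j | mu_j >= i}, for i >= 1 (automatically 0 for i > mu_1,
   i.e. padded by zeros) *)
Definition conj_part (mu : seq nat) (i : nat) : nat := count (fun m => i <= m)%N mu.

Definition dk (mu : seq nat) (n k : nat) : nat :=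
  (\sum_(n - k + 1 <= i < n + 1) conj_part mu i)%N.

(* underlined d: d_0 = 1, d_i = d_{i-1} + (mu'_i - 1)  (as integers, then as nat) *)
Fixpoint dl_int (mu : seq nat) (i : nat) : int :=
  match i with
  | 0 => 1
  | i'.+1 => dl_int mu i' + ((conj_part mu i'.+1)%:Z - 1)
  end.
Definition dl (mu : seq nat) (i : nat) : nat := `|dl_int mu i|%N.

Definition esymS (n : nat) (S : {set 'I_n}) (r : nat) : {mpoly rat[n]} :=
  \sum_(T : {set 'I_n} | (T \subset S) && (#|T| == r)) \prod_(i in T) 'X_i.

(* the set of variables x_1, ..., x_k (0-based indices < k) *)
Definition first_vars (n k : nat) : {set 'I_n} := [set i : 'I_n | (i < k)%N].

Definition in_ideal (n : nat) (G : {mpoly rat[n]} -> Prop) (p : {mpoly rat[n]}) : Prop :=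
  exists s : seq ({mpoly rat[n]} * {mpoly rat[n]}),
    (forall q, q \in s -> G q.2) /\ p = \sum_(q <- s) q.1 * q.2.

(* generators of the Tanisaki ideal: e_r(S), S ⊂ [n], |S| - d_{|S|}(mu) < r <= |S| *)
Definition tanisaki_gens (n : nat) (mu : seq nat) (p : {mpoly rat[n]}) : Prop :=
  exists (S : {set 'I_n}) (r : nat),
    (#|S| < r + dk mu n #|S|)%N /\ (r <= #|S|)%N /\ p = esymS S r.

Definition tanisaki (n : nat) (mu : seq nat) : {mpoly rat[n]} -> Prop :=
  in_ideal (tanisaki_gens mu).

Definition lemma_g (n : nat) (mu : seq nat) (g : {mpoly rat[n]}) : Prop :=
  (exists i : nat, [/\ (1 <= i)%N, (i <= part1 mu - 1)%N &
                     g = esymS (first_vars n (n - i)) (dl mu i)])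
  \/ (exists k : nat, [/\ (1 <= k)%N, (k <= n)%N & g = esymS [set: 'I_n] k]).

(* sigma . g, with sigma . x_i = x_{sigma(i)} (msym s maps 'X_i to 'X_(s i)) *)
Definition lemma_gens (n : nat) (mu : seq nat) (p : {mpoly rat[n]}) : Prop :=
  exists (s : 'S_n) (g : {mpoly rat[n]}), lemma_g mu g /\ p = msym s g.

From mathcomp Require Import all_boot all_order all_algebra all_fingroup.
From mathcomp Require Import mpoly zify.
Set Implicit Arguments. Unset Strict Implicit. Unset Printing Implicit Defensive.
Import GRing.Theory.
Local Open Scope ring_scope.

(* Put k = n - |S|.  Since dl_k + d_{n-k}(mu) = n - k + 1, the Tanisaki condition
   on e_r(S) reads dl_k <= r <= |S|, and every generator sigma . g satisfies it.
   Conversely, induct on k and then on r: for |S| = n, e_r(S) is one of the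
   e_r(x_1, ..., x_n); for r = dl_k it is a permuted generator; and for r > dl_k
   the Pascal rule e_r(S) = e_r(S + j) - x_j e_(r-1)(S), with j outside S, reduces
   to a set of size n - k + 1 (allowed since dl_(k-1) <= dl_k, as mu'_k >= 1) and
   to degree r - 1. *)

Lemma perm_enum_setC (T : finType) (A : {set T}) :
  perm_eq (enum A ++ enum (~: A)) (enum T).
Proof.
apply: uniq_perm => [||x]; rewrite ?enum_uniq ?mem_cat ?mem_enum ?in_setC ?orbN //.
rewrite cat_uniq !enum_uniq andbT /=; apply/hasPn => x.
by rewrite !mem_enum in_setC => /negbTE ->.
Qed.

Lemma exists_perm_imset (T : finType) (A B : {set T}) :
  #|A| = #|B| -> exists s : {perm T}, s @: A = B.
Proof.
move=> cardAB; pose sA := enum A ++ enum (~: A); pose sB := enum B ++ enum (~: B).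
have sAT := perm_enum_setC A; have sBT := perm_enum_setC B.
have sA_x x : x \in sA by rewrite (perm_mem sAT) mem_enum.
have size_sAB : size sA = size sB by rewrite (perm_size sAT) (perm_size sBT).
pose f x := nth x sB (index x sA).
have f_inj : injective f.
  move=> x y; rewrite /f (set_nth_default y) -?size_sAB ?index_mem //.
  move/eqP; rewrite nth_uniq -?size_sAB ?index_mem ?(perm_uniq sBT) ?enum_uniq //.
  by move/eqP/(congr1 (nth x sA)); rewrite !nth_index.
exists (perm f_inj); apply/eqP.
rewrite eqEcard card_imset ?cardAB ?leqnn ?andbT; last exact: perm_inj.
apply/subsetP => _ /imsetP[x xA ->]; rewrite permE /f /sA index_cat mem_enum xA.
have ltxB : (index x (enum A) < size (enum B))%N.
  by rewrite -cardE -cardAB cardE index_mem mem_enum.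
by rewrite nth_cat ltxB -(mem_enum B) mem_nth.
Qed.

Lemma imsetS_inj (aT rT : finType) (f : aT -> rT) (A B : {set aT}) :
  injective f -> (f @: A \subset f @: B) = (A \subset B).
Proof.
move=> f_inj; apply/idP/idP => [/subsetP fAB|/(imsetS f)//].
by apply/subsetP => x xA; rewrite -(mem_imset _ _ f_inj) fAB ?imset_f.
Qed.

Lemma card_le_ord n (S : {set 'I_n}) : (#|S| <= n)%N.
Proof. by rewrite -[X in (_ <= X)%N]card_ord max_card. Qed.

Lemma exists_notin (T : finType) (S : {set T}) : (#|S| < #|T|)%N -> exists j, j \notin S.
Proof.
move=> lt_S; have : (0 < #|~: S|)%N by have := cardsC S; lia.
by case/card_gt0P => j; rewrite inE; exists j.
Qed.

Lemma card_first_vars n k : (k <= n)%N -> #|first_vars n k| = k.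
Proof.
move=> le_k; have -> : first_vars n k = [set widen_ord le_k i | i in 'I_k].
  apply/setP => x; rewrite inE; apply/idP/imsetP => [lt_x|[y _ ->]]; last exact: (ltn_ord y).
  by exists (Ordinal lt_x) => //; apply: val_inj.
by rewrite card_imset ?card_ord // => x y /(congr1 val) /= /val_inj.
Qed.

Lemma msymXi (R : nzRingType) n (s : 'S_n) (i : 'I_n) :
  msym s ('X_i : {mpoly R[n]}) = 'X_(s i).
Proof.
rewrite msymX; congr mpolyX; apply/mnmP => j; rewrite !mnmE.
by rewrite -(inj_eq (@perm_inj _ s)) permKV eq_sym.
Qed.

Lemma msym_esymS n (s : 'S_n) (S : {set 'I_n}) r :
  msym s (esymS S r) = esymS (s @: S) r.
Proof.
have s_inj := @perm_inj _ s.
rewrite /esymS rmorph_sum [RHS](reindex_inj (imset_inj s_inj)) /=.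
apply: eq_big => [T|T _]; first by rewrite imsetS_inj ?card_imset.
rewrite rmorph_prod big_imset => [|x y _ _ /s_inj]//.
by apply: eq_bigr => i _; apply: msymXi.
Qed.

Lemma esymS_setU1 n (S : {set 'I_n}) (j : 'I_n) r : j \notin S ->
  esymS (j |: S) r.+1 = esymS S r.+1 + 'X_j * esymS S r.
Proof.
move=> jS; rewrite /esymS (bigID (fun T : {set _} => j \in T)) /= addrC big_distrr /=.
have subU1 (T : {set 'I_n}) : (T \subset j |: S) = (T :\ j \subset S) by rewrite subDset.
have subS_notin (T : {set 'I_n}) : j \in T -> (T \subset S) = false.
  by move=> jT; apply: contraNF jS => /subsetP->.
congr (_ + _).
  apply: eq_bigl => T; rewrite subU1; case: (boolP (j \in T)) => jT.
    by rewrite andbF subS_notin.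
  have /setDidPl-> : [disjoint T & [set j]] by rewrite disjoint_sym disjoints1.
  by rewrite andbT.
rewrite (reindex_onto (fun T => j |: T) (fun T => T :\ j)) /=; last first.
  by move=> T /andP[_ jT]; rewrite setD1K.
apply: eq_big => [T|T /andP[_ /eqP jT]]; last first.
  by rewrite big_setU1 //; rewrite -jT setD11.
rewrite subU1 setU11 andbT; case: (boolP (j \in T)) => jT.
  have -> : ((j |: T) :\ j == T) = false by apply: contraTF jT => /eqP<-; rewrite setD11.
  by rewrite andbF subS_notin.
by rewrite setU1K // cardsU1 jT eqxx andbT.
Qed.

Lemma sum_leq_minn a N : (\sum_(1 <= i < N.+1) (i <= a))%N = minn a N.
Proof.
elim: N => [|N IH]; first by rewrite big_geq ?minn0.
by rewrite big_nat_recr //= IH; lia.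
Qed.

Lemma sum_conj_part mu N : all (fun m => m <= N)%N mu ->
  (\sum_(1 <= i < N.+1) conj_part mu i)%N = sumn mu.
Proof.
elim: mu => [_|m mu IH /andP[mN muN]] /=; first by rewrite big1.
rewrite big_split /= sum_leq_minn IH //; lia.
Qed.

Section Partition.
Variables (n : nat) (mu : seq nat).
Hypothesis mu_part : is_partition n mu.

Lemma part1_le_n : (part1 mu <= n)%N.
Proof. by case: mu_part => _ _ <-; case: mu => //= m s; apply: leq_addr. Qed.

Lemma part_le_part1 m : m \in mu -> (m <= part1 mu)%N.
Proof.
case: mu_part; case: mu => [|a s] //= /(order_path_min (rev_trans leq_trans))/allP le_a _ _.
by rewrite inE => /predU1P[->//|/le_a].
Qed.

Lemma conj_part_gt_part1 i : (part1 mu < i)%N -> conj_part mu i = 0%N.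
Proof.
move=> lt_i; apply/eqP; rewrite -leqn0 leqNgt -has_count; apply/hasPn => m /part_le_part1.
by move=> le_m; rewrite -ltnNge (leq_ltn_trans le_m).
Qed.

Lemma conj_part_gt0 i : (0 < i)%N -> (i <= part1 mu)%N -> (0 < conj_part mu i)%N.
Proof.
case: mu => [|m s] i_gt0 le_i; first by rewrite (leq_trans i_gt0 le_i).
by rewrite /conj_part /= le_i.
Qed.

Lemma dkE k : (k <= n)%N -> dk mu n (n - k) = (\sum_(k.+1 <= i < n.+1) conj_part mu i)%N.
Proof. by move=> le_k; rewrite /dk subKn // !addn1. Qed.

Lemma dk_n : dk mu n n = n.
Proof.
rewrite -{2}(subn0 n) dkE // sum_conj_part; first by case: mu_part.
by apply/allP => m /part_le_part1 le_m; apply: leq_trans le_m part1_le_n.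
Qed.

Lemma dl_int_add_dk k : (k <= n)%N -> dl_int mu k + (dk mu n (n - k))%:Z = (n - k + 1)%:Z.
Proof.
elim: k => [|k IH] lt_k /=; first by rewrite subn0 dk_n; lia.
have := IH (ltnW lt_k); rewrite !dkE ?(ltnW lt_k) // big_ltn //; lia.
Qed.

Lemma tanisaki_degree_bound (S : {set 'I_n}) r :
  (#|S| < r + dk mu n #|S|)%N = (dl_int mu (n - #|S|) <= r%:Z).
Proof.
have le_S := card_le_ord S.
by have := dl_int_add_dk (leq_subr #|S| n); rewrite subKn //; lia.
Qed.

Lemma dl_int_le_subn k : (k <= n)%N -> (dl_int mu k <= (n - k)%:Z) = (k < part1 mu)%N.
Proof.
move=> le_k; have := dl_int_add_dk le_k; rewrite dkE //.
have [lt_k|le_part1] := ltnP k (part1 mu).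
  have lt_kn : (k < n)%N := leq_trans lt_k part1_le_n.
  by rewrite big_ltn // => dl_dk; have := conj_part_gt0 (ltn0Sn k) lt_k; lia.
rewrite big1_seq => [|i /andP[_]]; first lia.
by rewrite mem_index_iota => /andP[lt_i _]; apply: conj_part_gt_part1; lia.
Qed.

Lemma dl_int_leSn k : (k < part1 mu)%N -> dl_int mu k <= dl_int mu k.+1.
Proof. by move=> lt_k /=; have := conj_part_gt0 (ltn0Sn k) lt_k; lia. Qed.

Lemma dl_int_gt0 k : (k <= part1 mu)%N -> 0 < dl_int mu k.
Proof.
elim: k => [|k IH] // lt_k.
by have := dl_int_leSn lt_k; have := IH (ltnW lt_k); lia.
Qed.

Lemma dlE k : (k <= part1 mu)%N -> (dl mu k)%:Z = dl_int mu k.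
Proof. by move/dl_int_gt0; rewrite /dl; lia. Qed.

End Partition.

Section Ideal.
Variables (n : nat) (G : {mpoly rat[n]} -> Prop).

Lemma in_ideal_gen p : G p -> in_ideal G p.
Proof.
move=> Gp; exists [:: (1, p)]; split; last by rewrite big_seq1 mul1r.
by move=> q; rewrite inE => /eqP->.
Qed.

Lemma in_idealD p q : in_ideal G p -> in_ideal G q -> in_ideal G (p + q).
Proof.
move=> [s [Gs ->]] [t [Gt ->]]; exists (s ++ t); split; last by rewrite big_cat.
by move=> x; rewrite mem_cat => /orP[/Gs|/Gt].
Qed.

Lemma in_idealMl c p : in_ideal G p -> in_ideal G (c * p).
Proof.
move=> [s [Gs ->]]; exists [seq (c * x.1, x.2) | x <- s]; split.
  by move=> q /mapP[x xs ->] /=; apply: Gs.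
by rewrite big_map big_distrr; apply: eq_bigr => x _ /=; rewrite mulrA.
Qed.

Lemma in_idealB p q : in_ideal G p -> in_ideal G q -> in_ideal G (p - q).
Proof. by move=> Gp Gq; rewrite -mulN1r; apply: in_idealD (in_idealMl _ Gq). Qed.

Lemma in_ideal_trans (G' : {mpoly rat[n]} -> Prop) p :
  (forall q, G' q -> in_ideal G q) -> in_ideal G' p -> in_ideal G p.
Proof.
move=> G'G [s [G's ->]]; elim: s G's => [_|x s IH G's]; first by exists [::]; rewrite big_nil.
rewrite big_cons; apply: in_idealD; first by apply/in_idealMl/G'G/G's; rewrite inE eqxx.
by apply: IH => q qs; apply: G's; rewrite inE qs orbT.
Qed.

End Ideal.



Section TanisakiGenerators.
Variables (n : nat) (mu : seq nat).
Hypothesis mu_part : is_partition n mu.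

Lemma esymS_setT_in_ideal r : (0 < r <= n)%N ->
  in_ideal (lemma_gens mu) (esymS [set: 'I_n] r).
Proof.
move=> /andP[r_gt0 le_r]; apply: in_ideal_gen; exists 1%g, (esymS setT r).
by rewrite msym1m; split => //; right; exists r.
Qed.

Lemma esymS_dl_in_ideal k (S : {set 'I_n}) : (0 < k < part1 mu)%N ->
  #|S| = (n - k)%N -> in_ideal (lemma_gens mu) (esymS S (dl mu k)).
Proof.
move=> /andP[k_gt0 lt_k] card_S; apply: in_ideal_gen.
have [s <-] : exists s : 'S_n, s @: first_vars n (n - k) = S.
  by apply: exists_perm_imset; rewrite card_S card_first_vars ?leq_subr.
exists s, (esymS (first_vars n (n - k)) (dl mu k)); rewrite msym_esymS.
by split => //; left; exists k; split => //; lia.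
Qed.

Lemma esymS_in_ideal k (S : {set 'I_n}) r : (k <= n)%N -> #|S| = (n - k)%N ->
  dl_int mu k <= r%:Z -> (r <= n - k)%N -> in_ideal (lemma_gens mu) (esymS S r).
Proof.
elim: k S r => [|k IHk] S r le_k card_S le_dl le_r.
  rewrite subn0 in card_S le_r.
  have -> : S = setT by apply/eqP; rewrite eqEcard subsetT cardsT card_ord card_S leqnn.
  by apply: esymS_setT_in_ideal; rewrite /= in le_dl; lia.
have lt_k : (k.+1 < part1 mu)%N by rewrite -(dl_int_le_subn mu_part le_k); lia.
elim: r le_dl le_r => [|r IHr] le_dl le_r; first by have := dl_int_gt0 (ltnW lt_k); lia.
have [eq_r|lt_dl] := eqVneq (r.+1%:Z) (dl_int mu k.+1).
  by have := dlE (ltnW lt_k); rewrite -eq_r => -[<-]; apply: esymS_dl_in_ideal.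
have [j jS] : exists j, j \notin S by apply: exists_notin; rewrite card_ord; lia.
rewrite -[esymS S _](addrK ('X_j * esymS S r)) -esymS_setU1 //.
apply: in_idealB; last by apply/in_idealMl/IHr; lia.
have dl_step := dl_int_leSn (ltnW lt_k).
by apply: IHk; rewrite ?cardsU1 ?jS ?card_S; lia.
Qed.

Lemma tanisaki_gens_in_ideal (p : {mpoly rat[n]}) :
  tanisaki_gens mu p -> in_ideal (lemma_gens mu) p.
Proof.
move=> [S [r [lt_r [le_r ->]]]]; rewrite (tanisaki_degree_bound mu_part) in lt_r.
have le_S := card_le_ord S.
by apply: (esymS_in_ideal (leq_subr #|S| n)); rewrite ?subKn.
Qed.

Lemma tanisaki_gens_esymS (S : {set 'I_n}) r :
  dl_int mu (n - #|S|) <= r%:Z -> (r <= #|S|)%N -> tanisaki_gens mu (esymS S r).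
Proof. by move=> le_dl le_r; exists S, r; rewrite (tanisaki_degree_bound mu_part). Qed.

Lemma lemma_gens_tanisaki (p : {mpoly rat[n]}) : lemma_gens mu p -> tanisaki_gens mu p.
Proof.
have card_perm_imset (s : 'S_n) (S : {set 'I_n}) : #|s @: S| = #|S|.
  by apply: card_imset; apply: perm_inj.
move=> [s [g [[[k [k_gt0 lt_k ->]]|[r [r_gt0 le_r ->]]] ->]]]; rewrite msym_esymS.
  have lt_k1 : (k < part1 mu)%N by lia.
  have lt_kn : (k < n)%N := leq_trans lt_k1 (part1_le_n mu_part).
  have dl_k : (dl mu k)%:Z = dl_int mu k := dlE (ltnW lt_k1).
  have le_dl : (dl mu k <= n - k)%N.
    by have := dl_int_le_subn mu_part (ltnW lt_kn); rewrite lt_k1 -dl_k; lia.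
  apply: tanisaki_gens_esymS; rewrite card_perm_imset card_first_vars ?leq_subr //.
  by rewrite subKn ?dl_k // ltnW.
by apply: tanisaki_gens_esymS; rewrite card_perm_imset cardsT card_ord // subnn.
Qed.

End TanisakiGenerators.

Theorem lemma2p1 (n : nat) (mu : seq nat) :
  is_partition n mu ->
  forall p : {mpoly rat[n]}, tanisaki mu p <-> in_ideal (lemma_gens mu) p.
Proof.
move=> mu_part p; split; apply: in_ideal_trans => q.
  exact: tanisaki_gens_in_ideal.
by move/(lemma_gens_tanisaki mu_part); apply: in_ideal_gen.
Qed.
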